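(* Let $a,b\in C^0(\mathbb{R})$ be even and positive, and let $G\in C^0(\mathbb{R})$ be even with $G(s)\ge G(M)=0$ for all $s\in\mathbb{R}$ and $G(s)>0$ for $s\in[0,M)$, for some $M>0$. Let $m>0$. Then there exists a constant $C^{as}>0$ depending only on $a,b,G,M,m$ (and not on $L$) such that for every $L>0$, with $I=(-L,L)$, $$\mathcal{E}(u,I)\ge C^{as}\quad\text{for all odd } u\in H^1_m(I).$$ Moreover, one can take $$C^{as}:=\inf_{t>0}\Big\{\frac{m_0^2}{\int_0^t 1/a}+2G_0\int_0^t b\Big\},\qquad m_0:=\tfrac12\min\{m,M\},\quad G_0:=\inf_{s\in(0,m_0)}G(s).$$
   Context: $H^1_m(I):=\{u\in H^1(I):u(-L)=-m,\ u(L)=m\}$ and $\mathcal{E}(u,I):=\int_{-L}^L\{\tfrac12(u')^2a(x)+G(u)b(x)\}\,dx$. *)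

From HB Require Import structures.
From mathcomp Require Import all_boot all_order all_algebra.
From mathcomp Require Import all_classical all_reals all_analysis.
Set Implicit Arguments. Unset Strict Implicit. Unset Printing Implicit Defensive.
Import Order.TTheory GRing.Theory Num.Theory numFieldNormedType.Exports.
Local Open Scope classical_set_scope.
Local Open Scope ring_scope.

Section Defs.
Variable R : realType.
Notation mu := (@lebesgue_measure R).

(* u (restricted to [-L,L]) belongs to H^1(-L,L) with weak derivative u':
   the 1-D characterization of H^1 on a bounded interval: u' is measurable,
   square-integrable on (-L,L), and u is (the continuous representative)
   u(x) = u(-L) + \int_{-L}^x u'. *)
Definition H1_with_deriv (L : R) (u u' : R -> R) : Prop :=
  [/\ measurable_fun `[-L, L] u',
      (\int[mu]_(x in `[(- L)%R, L]) ((u' x) ^+ 2)%:E < +oo)%E &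
      forall x, -L <= x <= L ->
        u x = u (- L) + Rintegral mu `[-L, x] u'].

Definition H1m_with_deriv (L m : R) (u u' : R -> R) : Prop :=
  [/\ H1_with_deriv L u u', u (- L) = - m & u L = m].

Definition odd_on (L : R) (u : R -> R) : Prop :=
  forall x, -L < x < L -> u (- x) = - u x.

Definition energy (a b G : R -> R) (L : R) (u u' : R -> R) : \bar R :=
  (\int[mu]_(x in `](- L)%R, L[) ((2^-1 * (u' x) ^+ 2 * a x + G (u x) * b x)%:E))%E.

Definition m0 (m M : R) : R := 2^-1 * Num.min m M.

Definition G0 (G : R -> R) (m M : R) : R :=
  inf [set G s | s in `]0, m0 m M[].

Definition Cas (a b G : R -> R) (m M : R) : R :=
  inf [set (m0 m M) ^+ 2 / Rintegral mu `[0, t] (fun x => 1 / a x)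
           + 2 * G0 G m M * Rintegral mu `[0, t] b | t in `]0, +oo[].

End Defs.

From HB Require Import structures.
From mathcomp Require Import all_boot all_order all_algebra.
From mathcomp Require Import all_classical all_reals all_analysis.
From mathcomp Require Import ring lra.
Import Order.TTheory GRing.Theory Num.Theory numFieldNormedType.Exports.
Import measurable_realfun.
Local Open Scope classical_set_scope.
Local Open Scope ring_scope.

(* Let [beta] be the first point of [0, L] where [|u|] reaches [m0] (it exists
   since [u 0 = 0] and [u L = m > m0]).  On [(-beta, beta)] we have [|u| < m0 < M],
   hence [G u >= G0], and by oddness [\int_(-beta)^beta u' = 2 u beta] with
   [|u beta| >= m0].  A weighted Cauchy-Schwarz inequality and the evenness of [a]
   and [b] then bound the energy below by
   [m0^2 / \int_0^beta 1/a + 2 G0 \int_0^beta b], one of the quantities whose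
   infimum is [Cas]. *)

Section interval_integrals.
Context {R : realType}.
Notation mu := (@lebesgue_measure R).
Implicit Types (f : R -> R) (x y c t : R).

Lemma continuous_integrable_itv f x y : continuous f ->
  mu.-integrable `[x, y] (EFin \o f).
Proof.
move=> cf; apply: continuous_compact_integrable; first exact: segment_compact.
exact: continuous_subspaceT.
Qed.

Lemma Rintegral_itv_oo_cc f x y : mu.-integrable `[x, y] (EFin \o f) ->
  \int[mu]_(t in `]x, y[) f t = \int[mu]_(t in `[x, y]) f t.
Proof.
move=> fi; rewrite Rintegral_itv_bndo_bndc; last first.
  by apply: integrableS fi => //; apply: subset_itv; rewrite bnd_simp.
rewrite Rintegral_itv_obnd_cbnd //.
by apply: integrableS fi => //; apply: subset_itv; rewrite bnd_simp.
Qed.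

Lemma Rintegral_itv_split f x c y : mu.-integrable `[x, y] (EFin \o f) ->
  x <= c <= y ->
  \int[mu]_(t in `[x, y]) f t =
    \int[mu]_(t in `[x, c]) f t + \int[mu]_(t in `[c, y]) f t.
Proof.
move=> fi /andP[xc cy].
have := @Rintegral_itvB R f (BLeft x) (BRight y) c fi.
rewrite !bnd_simp xc cy => /(_ isT isT).
rewrite Rintegral_itv_obnd_cbnd; first lra.
by apply: integrableS fi => //; apply: subset_itv; rewrite bnd_simp.
Qed.

Lemma Rintegral_itv_gt0 f x y : continuous f -> (forall t, 0 < f t) -> x < y ->
  0 < \int[mu]_(t in `[x, y]) f t.
Proof.
move=> cf fgt0 xy.
have [c _ fc_min] := EVT_min (ltW xy) (continuous_subspaceT cf).
apply: (@lt_le_trans _ _ (\int[mu]_(t in `[x, y]) f c)).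
  rewrite Rintegral_cst //= lebesgue_measure_itv /= lte_fin xy /=.
  by rewrite mulr_gt0 // subr_gt0.
apply: le_Rintegral => //; first exact/continuous_integrable_itv/cst_continuous.
exact: continuous_integrable_itv.
Qed.

Lemma le_Rintegral_itv_r f x s t : continuous f -> (forall t, 0 <= f t) ->
  x <= s <= t ->
  \int[mu]_(y in `[x, s]) f y <= \int[mu]_(y in `[x, t]) f y.
Proof.
move=> cf fge0 /andP[xs st].
rewrite [leRHS](@Rintegral_itv_split _ _ s) ?xs //.
  by rewrite lerDl Rintegral_ge0.
exact: continuous_integrable_itv.
Qed.

Lemma Rintegral_itv_even f t : continuous f -> (forall x, f (- x) = f x) ->
  0 <= t ->
  \int[mu]_(x in `[- t, t]) f x = 2 * \int[mu]_(x in `[0, t]) f x.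
Proof.
move=> cf feven t_ge0.
rewrite (@Rintegral_itv_split _ _ 0) ?oppr_le0 ?t_ge0 //; last first.
  exact: continuous_integrable_itv.
have -> : \int[mu]_(x in `[- t, 0]) f x = \int[mu]_(x in `[0, t]) f x.
  have := integration_by_substitution_oppr t_ge0 (continuous_subspaceT cf).
  rewrite oppr0 /Rintegral => ->; congr fine.
  by apply: eq_integral => x _ /=; rewrite feven.
by rewrite mulr2n mulrDl mul1r.
Qed.

End interval_integrals.

Section weighted_Cauchy_Schwarz.
Context {R : realType}.
Notation mu := (@lebesgue_measure R).
Context {D : set R}.
Hypothesis mD : measurable D.

Lemma integral_EFin_Rintegral (f : R -> R) : mu.-integrable D (EFin \o f) ->
  (\int[mu]_(x in D) (f x)%:E = (\int[mu]_(x in D) f x)%:E)%E.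
Proof. by move=> fi; rewrite /Rintegral fineK // integrable_fin_num. Qed.

(* Cauchy-Schwarz in the form [(\int f)^2 <= \int f^2 a * \int a^-1], proved by
   integrating [lam f - lam^2/2 a^-1 <= f^2 a / 2] with [lam = \int f / \int a^-1]. *)
Lemma sqr_Rintegral_le_weighted (f a : R -> R) :
  measurable_fun D f -> measurable_fun D a -> (forall x, 0 < a x) ->
  mu.-integrable D (EFin \o f) -> mu.-integrable D (EFin \o (fun x => (a x)^-1)) ->
  0 < \int[mu]_(x in D) (a x)^-1 ->
  (((\int[mu]_(x in D) f x) ^+ 2 / (2 * \int[mu]_(x in D) (a x)^-1))%:E <=
    \int[mu]_(x in D) (2^-1 * f x ^+ 2 * a x)%:E)%E.
Proof.
move=> mf ma a_gt0 fi ai W_gt0.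
set F := \int[mu]_(x in D) f x; set W := \int[mu]_(x in D) (a x)^-1.
set k := fun x => 2^-1 * f x ^+ 2 * a x.
have k_ge0 x : 0 <= k x.
  by rewrite /k mulr_ge0 ?(ltW (a_gt0 x)) // mulr_ge0 ?sqr_ge0.
have mk : measurable_fun D k.
  by apply: measurable_funM => //; apply: measurable_funM => //; exact: measurable_funX.
have [kfin|] := ltP (\int[mu]_(x in D) (k x)%:E)%E +oo%E; last first.
  by rewrite leye_eq => /eqP ->; rewrite leey.
have ki : mu.-integrable D (EFin \o k).
  apply/integrableP; split; first exact/measurable_EFinP.
  by under eq_integral do rewrite gee0_abs ?lee_fin //.
rewrite integral_EFin_Rintegral // lee_fin.
set lam := F / W.
have fZi : mu.-integrable D (EFin \o (fun x => lam * f x)).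
  by have := @integrableZl _ _ _ mu D mD lam _ fi; apply: eq_integrable => // x _.
have aZi : mu.-integrable D (EFin \o (fun x => lam ^+ 2 / 2 * (a x)^-1)).
  have := @integrableZl _ _ _ mu D mD (lam ^+ 2 / 2) _ ai.
  by apply: eq_integrable => // x _.
have gi : mu.-integrable D (EFin \o (fun x => lam * f x - lam ^+ 2 / 2 * (a x)^-1)).
  have := @integrableB _ _ _ mu D mD _ _ fZi aZi.
  by apply: eq_integrable => // x _ /=; rewrite EFinB.
have -> : F ^+ 2 / (2 * W) = lam * F - lam ^+ 2 / 2 * W.
  by rewrite /lam; field; rewrite gt_eqF.
rewrite -RintegralZl // -[X in _ - X]RintegralZl // -RintegralB //.
apply: le_Rintegral => // x _; rewrite -subr_ge0.
have -> : k x - (lam * f x - lam ^+ 2 / 2 * (a x)^-1) =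
          (f x * a x - lam) ^+ 2 / (2 * a x).
  by rewrite /k; field; rewrite gt_eqF.
by rewrite divr_ge0 ?sqr_ge0 // mulr_ge0 // ltW.
Qed.

End weighted_Cauchy_Schwarz.

Section H1_functions.
Context {R : realType}.
Notation mu := (@lebesgue_measure R).
Context {L : R} {u u' : R -> R}.
Hypothesis uH1 : H1_with_deriv L u u'.

Lemma H1_integrable_deriv : mu.-integrable `[- L, L] (EFin \o u').
Proof.
case: uH1 => mu' u'_sqr _.
apply: (@le_integrable _ _ _ mu _ _ _ (fun x => (1 + u' x ^+ 2)%:E)) => //.
- exact/measurable_EFinP.
- move=> x _ /=; rewrite !lee_fin [leRHS]ger0_norm ?addr_ge0 ?sqr_ge0 //.
  rewrite -[u' x ^+ 2]real_normK ?num_real //.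
  by have := normr_ge0 (u' x); nra.
- have -> : (fun x => (1 + u' x ^+ 2)%:E) =
            (EFin \o cst 1) \+ (fun x => (u' x ^+ 2)%:E).
    by apply/funext => x /=; rewrite EFinD.
  apply: integrableD => //; first exact/continuous_integrable_itv/cst_continuous.
  apply/integrableP; split; first exact/measurable_EFinP/measurable_funX.
  by under eq_integral do rewrite gee0_abs ?lee_fin ?sqr_ge0 //.
Qed.

Lemma H1_Rintegral_deriv x y : - L <= x <= y -> y <= L ->
  \int[mu]_(t in `[x, y]) u' t = u y - u x.
Proof.
move=> /andP[Lx xy] yL; case: uH1 => _ _ u_rep.
rewrite (u_rep y) ?(u_rep x) ?Lx ?yL ?(le_trans Lx xy) ?(le_trans xy yL) //.
rewrite (@Rintegral_itv_split _ u' (- L) x y) ?Lx //; first lra.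
by apply: integrableS H1_integrable_deriv => //; apply: subset_itv; rewrite bnd_simp.
Qed.

Lemma H1_continuous : - L <= L -> {within `[- L, L], continuous u}.
Proof.
move=> NL_le_L; case: uH1 => _ _ u_rep.
have cF := parameterized_integral_continuous NL_le_L H1_integrable_deriv.
apply: (@subspace_eq_continuous _ _ _
   (fun x => u (- L) + parameterized_integral mu (- L) x u')).
  by move=> x; rewrite inE /= => xLL; rewrite /from_subspace /= [in RHS]u_rep.
by move=> x; apply: cvgD; [exact: cvg_cst | exact: cF].
Qed.

End H1_functions.

Section first_exit.
Context {R : realType}.

Lemma within_continuous_dist_lt [f : R -> R] [A : set R] [x e : R] :
  {within A, continuous f} -> A x -> 0 < e ->
  exists2 d, 0 < d & forall y, A y -> `|x - y| < d -> `|f x - f y| < e.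
Proof.
move=> /subspace_continuousP cf Ax e_gt0.
have /cvgrPdist_lt /(_ e e_gt0) := cf x Ax.
rewrite /prop_near1 /within /= => /nbhs_ballP [d d_gt0 fd].
by exists d => // y Ay xy; apply: fd.
Qed.

Lemma first_exit_point [f : R -> R] [L p : R] : 0 <= L ->
  {within `[0, L], continuous f} -> `|f 0| < p -> p <= `|f L| ->
  exists2 beta, 0 < beta <= L &
    p <= `|f beta| /\ forall x, 0 <= x < beta -> `|f x| < p.
Proof.
move=> L_ge0 cf f0_lt fL_ge.
set S := [set x | 0 <= x <= L /\ p <= `|f x|].
have SL : S L by split; rewrite ?L_ge0 ?lexx.
have S_inf : has_inf S by split; [exists L | exists 0 => x [/andP[]]].
set beta := inf S.
have beta_ge0 : 0 <= beta by apply: lb_le_inf => [|x [/andP[]]]; first exists L.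
have beta_le : beta <= L by apply: ge_inf => //; case: S_inf.
have below x : 0 <= x < beta -> `|f x| < p.
  move=> /andP[x_ge0 x_lt]; rewrite ltNge; apply/negP => fx_ge.
  have : beta <= x by apply: ge_inf; [case: S_inf | split; rewrite ?x_ge0 /=; lra].
  lra.
have hit : p <= `|f beta|.
  rewrite leNgt; apply/negP => fbeta_lt.
  have beta_in : `[0, L]%classic beta by rewrite /= in_itv /= beta_ge0.
  have e_gt0 : 0 < p - `|f beta| by rewrite subr_gt0.
  have [d d_gt0 fd] := within_continuous_dist_lt cf beta_in e_gt0.
  have [s [/andP[s_ge0 s_le] fs_ge] s_lt] := inf_adherent d_gt0 S_inf.
  have beta_le_s : beta <= s by apply: ge_inf; [case: S_inf | split; rewrite ?s_ge0].
  have s_in : `[0, L]%classic s by rewrite /= in_itv /= s_ge0.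
  have : `|beta - s| < d by rewrite distrC ger0_norm ?subr_ge0 //; lra.
  move=> /(fd s s_in).
  have := lerB_dist (f s) (f beta); rewrite distrC; lra.
have beta_gt0 : 0 < beta.
  rewrite lt_neqAle beta_ge0 andbT; apply/eqP => beta0.
  by move: hit; rewrite -beta0; lra.
by exists beta; rewrite ?beta_gt0.
Qed.

End first_exit.

Section asymptotic_constant.
Context {R : realType}.
Notation mu := (@lebesgue_measure R).
Context {m M : R}.
Hypotheses (m_gt0 : 0 < m) (M_gt0 : 0 < M).

Lemma m0_gt0 : 0 < m0 m M.
Proof. by rewrite /m0 mulr_gt0 ?invr_gt0 // lt_min m_gt0. Qed.

Lemma m0_lt_min : m0 m M < Num.min m M.
Proof.
have min_gt0 : 0 < Num.min m M by rewrite lt_min m_gt0.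
by rewrite /m0; lra.
Qed.

Context {G : R -> R}.
Hypotheses (cG : continuous G) (G_even : forall s, G (- s) = G s).
Hypotheses (G_ge_GM : forall s, G M <= G s) (G_gt0 : forall s, 0 <= s < M -> 0 < G s).

Let G_m0 := [set G s | s in `]0, m0 m M[].

Lemma G0_set_neq0 : G_m0 !=set0.
Proof.
exists (G (m0 m M / 2)), (m0 m M / 2) => //.
rewrite /= in_itv /=; have := m0_gt0; lra.
Qed.

Lemma G0_gt0 : 0 < G0 G m M.
Proof.
have [c] := EVT_min (ltW m0_gt0) (continuous_subspaceT cG).
rewrite in_itv /= => /andP[c_ge0 c_le] Gc_min.
apply: (@lt_le_trans _ _ (G c)).
  apply: G_gt0; rewrite c_ge0 (le_lt_trans c_le) //.
  by apply: lt_le_trans m0_lt_min _; rewrite ge_min lexx orbT.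
apply: lb_le_inf; first exact: G0_set_neq0.
move=> _ [s + <-]; rewrite /= in_itv /= => /andP[s_gt0 s_lt].
by apply: Gc_min; rewrite in_itv /= !ltW.
Qed.

Lemma G0_le s : `|s| < m0 m M -> G0 G m M <= G s.
Proof.
have G0_lb : has_lbound G_m0 by exists (G M) => _ [s' _ <-].
have G0_le_pos s' : 0 < s' < m0 m M -> G0 G m M <= G s'.
  by move=> s'_in; apply: ge_inf => //; exists s'; rewrite //= in_itv.
have G0_le_G0 : G0 G m M <= G 0.
  apply: (@cvgr_to_ge _ (0^'+) _ _ G); first exact: cvg_within_filter (cG 0).
  near=> y; apply: G0_le_pos; apply/andP; split; near: y.
    exact: nbhs_right_gt.
  exact: nbhs_right_lt m0_gt0.
case: (ltgtP s 0) => [s_lt0 | s_gt0 | ->] // s_lt.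
  by rewrite -G_even; apply: G0_le_pos; rewrite oppr_gt0 s_lt0 -(ltr0_norm s_lt0).
by apply: G0_le_pos; rewrite s_gt0 -(gtr0_norm s_gt0).
Unshelve. all: by end_near.
Qed.

Context {a b : R -> R}.
Hypotheses (ca : continuous a) (cb : continuous b).
Hypotheses (a_gt0 : forall x, 0 < a x) (b_gt0 : forall x, 0 < b x).

Let ca_inv : continuous (fun x => (a x)^-1).
Proof. by move=> x; apply: continuousV; [exact: lt0r_neq0 | exact: ca]. Qed.

Let Rintegral_div1r t :
  \int[mu]_(x in `[0, t]) (1 / a x) = \int[mu]_(x in `[0, t]) (a x)^-1.
Proof. by apply: eq_Rintegral => x _; rewrite div1r. Qed.

Let Cas_term_ge0 t :
  0 <= m0 m M ^+ 2 / \int[mu]_(x in `[0, t]) (a x)^-1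
       + 2 * G0 G m M * \int[mu]_(x in `[0, t]) b x.
Proof.
rewrite addr_ge0 ?divr_ge0 ?sqr_ge0 ?mulr_ge0 ?(ltW G0_gt0) //.
  by apply: Rintegral_ge0 => x _; rewrite invr_ge0 ltW.
by apply: Rintegral_ge0 => x _; rewrite ltW.
Qed.

Lemma Cas_le t : 0 < t ->
  Cas a b G m M <= m0 m M ^+ 2 / \int[mu]_(x in `[0, t]) (a x)^-1
                   + 2 * G0 G m M * \int[mu]_(x in `[0, t]) b x.
Proof.
move=> t_gt0; apply: ge_inf; first by exists 0 => _ [s _ <-]; rewrite Rintegral_div1r.
by exists t; rewrite ?Rintegral_div1r // /= in_itv /= t_gt0.
Qed.

Lemma Cas_gt0 : 0 < Cas a b G m M.
Proof.
pose A t := \int[mu]_(x in `[0, t]) (a x)^-1.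
pose B t := \int[mu]_(x in `[0, t]) b x.
have ainv_gt0 x : 0 < (a x)^-1 by rewrite invr_gt0.
have A1_gt0 : 0 < A 1 by apply: Rintegral_itv_gt0.
have B1_gt0 : 0 < B 1 by apply: Rintegral_itv_gt0.
(* For [t <= 1] the first term is at least its value at [1], for [t >= 1] the
   second one is. *)
pose k := Num.min (m0 m M ^+ 2 / A 1) (2 * G0 G m M * B 1).
have k_gt0 : 0 < k by rewrite lt_min divr_gt0 ?exprn_gt0 ?m0_gt0 // !mulr_gt0 ?G0_gt0.
apply: (lt_le_trans k_gt0); apply: lb_le_inf.
  by eexists; exists 1; rewrite /= ?in_itv /= ?andbT.
move=> _ [t + <-]; rewrite /= in_itv /= andbT Rintegral_div1r -/(A t) -/(B t).
move=> t_gt0.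
have At_gt0 : 0 < A t by apply: Rintegral_itv_gt0.
have Bt_ge0 : 0 <= B t by apply: Rintegral_ge0 => x _; apply: ltW.
have m0G0_ge0 : 0 <= 2 * G0 G m M by rewrite mulr_ge0 ?(ltW G0_gt0).
have k_le1 : k <= m0 m M ^+ 2 / A 1 by rewrite ge_min lexx.
have k_le2 : k <= 2 * G0 G m M * B 1 by rewrite ge_min lexx orbT.
case: (lerP t 1) => [t_le1 | t_gt1].
  have : m0 m M ^+ 2 / A 1 <= m0 m M ^+ 2 / A t.
    rewrite ler_wpM2l ?sqr_ge0 // lef_pV2 ?posrE //.
    by apply: le_Rintegral_itv_r => // [x|]; [exact: ltW | rewrite (ltW t_gt0)].
  have : 0 <= 2 * G0 G m M * B t by rewrite mulr_ge0.
  lra.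
have : 2 * G0 G m M * B 1 <= 2 * G0 G m M * B t.
  rewrite ler_wpM2l //.
  by apply: le_Rintegral_itv_r => // [x|]; [exact: ltW | rewrite ler01 (ltW t_gt1)].
have : 0 <= m0 m M ^+ 2 / A t by rewrite divr_ge0 ?sqr_ge0 ?ltW.
lra.
Qed.

End asymptotic_constant.

Section odd_H1m.
Context {R : realType}.
Notation mu := (@lebesgue_measure R).
Context {L m : R} {u u' : R -> R}.
Hypotheses (L_gt0 : 0 < L) (uH1m : H1m_with_deriv L m u u') (u_odd : odd_on L u).

Lemma H1m_odd_oppr x : 0 <= x <= L -> u (- x) = - u x.
Proof.
move=> /andP[x_ge0 x_le]; case: uH1m => _ uNL uL.
have [x_lt | x_ge] := ltP x L; first by apply: u_odd; apply/andP; split; lra.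
have -> : x = L by apply/eqP; rewrite eq_le x_le.
by rewrite uNL uL.
Qed.

Lemma H1m_odd_exit p : 0 < p <= m ->
  exists2 beta, 0 < beta <= L &
    [/\ p <= `|u beta|, forall x, - beta < x < beta -> `|u x| < p
      & \int[mu]_(x in `[- beta, beta]) u' x = 2 * u beta].
Proof.
move=> /andP[p_gt0 p_le]; case: uH1m => uH1 _ uL.
have u0 : u 0 = 0 by have := H1m_odd_oppr 0; rewrite oppr0 lexx ltW //; lra.
have cu : {within `[0, L], continuous u}.
  have NL_le_L : - L <= L by rewrite -subr_ge0 opprK addr_ge0 // ltW.
  apply: continuous_subspaceW (H1_continuous uH1 NL_le_L).
  by apply: subset_itv; rewrite bnd_simp ?oppr_le0 ?(ltW L_gt0).
have u0_lt : `|u 0| < p by rewrite u0 normr0.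
have uL_ge : p <= `|u L| by rewrite uL ger0_norm // ltW // (lt_le_trans p_gt0).
have [beta /andP[beta_gt0 beta_le] [hit below]] :=
  first_exit_point (ltW L_gt0) cu u0_lt uL_ge.
exists beta; rewrite ?beta_gt0 //; split => //.
  move=> x /andP[Nbeta_lt beta_gt]; have [x_ge0 | x_lt0] := leP 0 x.
    by apply: below; rewrite x_ge0.
  rewrite -[x]opprK H1m_odd_oppr ?normrN; last by apply/andP; split; lra.
  by apply: below; apply/andP; split; lra.
rewrite (H1_Rintegral_deriv uH1) // ?H1m_odd_oppr ?beta_le ?(ltW beta_gt0) //.
  lra.
by apply/andP; split; lra.
Qed.

End odd_H1m.

Section energy_bounds.
Context {R : realType}.
Notation mu := (@lebesgue_measure R).
Context {a b G : R -> R} {L : R} {u u' : R -> R}.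
Hypotheses (ca : continuous a) (cb : continuous b) (cG : continuous G).
Hypotheses (a_gt0 : forall x, 0 < a x) (b_gt0 : forall x, 0 < b x).
Hypotheses (G_ge0 : forall s, 0 <= G s) (L_gt0 : 0 < L) (uH1 : H1_with_deriv L u u').

Lemma energy_ge_restrict beta c : 0 < beta <= L -> 0 <= c ->
  (forall x, - beta < x < beta -> c <= G (u x)) ->
  (\int[mu]_(x in `](- beta)%R, beta[) (2^-1 * u' x ^+ 2 * a x)%:E
     + (c * \int[mu]_(x in `]- beta, beta[) b x)%:E <= energy a b G L u u')%E.
Proof.
move=> /andP[beta_gt0 beta_le] c_ge0 c_le.
set I := `[- L, L]%classic; set O := `]- L, L[%classic.
set J := `]- beta, beta[%classic.
have mI : measurable I := measurable_itv _.
have mJ : measurable J := measurable_itv _.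
have OI : O `<=` I by apply: subset_itv; rewrite bnd_simp.
have JO : J `<=` O by apply: subset_itv; rewrite bnd_simp ?lerN2.
have JI : J `<=` I := subset_trans JO OI.
have mu' : measurable_fun I u' by case: uH1.
have mu_ : measurable_fun I u.
  apply: subspace_continuous_measurable_fun => //; apply: H1_continuous uH1 _.
  by rewrite -subr_ge0 opprK addr_ge0 // ltW.
have ma : measurable_fun I a := measurable_funTS (continuous_measurable_fun ca).
have mb : measurable_fun I b := measurable_funTS (continuous_measurable_fun cb).
have mGu : measurable_fun I (G \o u) :=
  measurableT_comp (continuous_measurable_fun cG) mu_.
set k1 := fun x => 2^-1 * u' x ^+ 2 * a x.
have k1_ge0 x : 0 <= k1 x by rewrite mulr_ge0 ?(ltW (a_gt0 x)) // mulr_ge0 ?sqr_ge0.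
have mk1 : measurable_fun I k1.
  by apply: measurable_funM => //; apply: measurable_funM => //; exact: measurable_funX.
set h := fun x => k1 x + G (u x) * b x.
have h_ge0 x : 0 <= h x by rewrite addr_ge0 // mulr_ge0 ?(ltW (b_gt0 x)).
have mh : measurable_fun I h.
  by apply: measurable_funD => //; apply: measurable_funM.
have cb_ge0 x : 0 <= c * b x by rewrite mulr_ge0 ?(ltW (b_gt0 x)).
have mcb : measurable_fun J (fun x => c * b x).
  by apply: measurable_funM => //; exact: measurable_funS mb.
have cbi : mu.-integrable J (EFin \o (fun x => c * b x)).
  apply: integrableS (continuous_integrable_itv _ (- beta) beta _) => //.
    by apply: subset_itv; rewrite bnd_simp.
  by move=> x; apply: continuousM; [exact: cvg_cst | exact: cb].
have energy_ge_J : (\int[mu]_(x in J) (h x)%:E <= energy a b G L u u')%E.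
  apply: ge0_subset_integral => //; last by move=> x _; rewrite lee_fin.
  by apply/measurable_EFinP; exact: measurable_funS mh.
have h_ge_J :
    (\int[mu]_(x in J) (k1 x + c * b x)%:E <= \int[mu]_(x in J) (h x)%:E)%E.
  apply: ge0_le_integral => //.
  - by move=> x _; rewrite lee_fin addr_ge0.
  - by apply/measurable_EFinP; apply: measurable_funD => //; exact: measurable_funS mk1.
  - by apply/measurable_EFinP; exact: measurable_funS mh.
  move=> x; rewrite /J /= in_itv /= => x_in; rewrite lee_fin lerD2l.
  by apply: ler_wpM2r; [exact: ltW | exact: c_le].
apply: le_trans energy_ge_J; apply: le_trans h_ge_J.
under [X in (_ <= X)%E]eq_integral do rewrite EFinD.
rewrite ge0_integralD //; first last.
- exact/measurable_EFinP.
- by move=> x _; rewrite lee_fin.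
- by apply/measurable_EFinP; exact: measurable_funS mk1.
- by move=> x _; rewrite lee_fin.
suff -> : (\int[mu]_(x in J) (c * b x)%:E = (c * \int[mu]_(x in J) b x)%:E)%E by [].
rewrite integral_EFin_Rintegral // RintegralZl //.
apply: integrableS (continuous_integrable_itv _ (- beta) beta cb) => //.
by apply: subset_itv; rewrite bnd_simp.
Qed.

Hypotheses (a_even : forall x, a (- x) = a x) (b_even : forall x, b (- x) = b x).

Lemma energy_ge_exit beta p c : 0 < beta <= L -> 0 <= c -> 0 <= p ->
  p <= `|u beta| -> (forall x, - beta < x < beta -> c <= G (u x)) ->
  \int[mu]_(x in `[- beta, beta]) u' x = 2 * u beta ->
  ((p ^+ 2 / \int[mu]_(x in `[0, beta]) (a x)^-1
     + 2 * c * \int[mu]_(x in `[0, beta]) b x)%:E <= energy a b G L u u')%E.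
Proof.
move=> beta_in c_ge0 p_ge0 p_le c_le int_u'.
have /andP[beta_gt0 beta_le] := beta_in.
set J := `]- beta, beta[%classic.
have mJ : measurable J := measurable_itv _.
have JI : J `<=` `[- L, L] by apply: subset_itv; rewrite bnd_simp ?lerN2.
have ca_inv : continuous (fun x => (a x)^-1).
  by move=> x; apply: continuousV; [exact: lt0r_neq0 | exact: ca].
have A_gt0 : 0 < \int[mu]_(x in `[0, beta]) (a x)^-1.
  by apply: Rintegral_itv_gt0 => // x; rewrite invr_gt0.
have int_J f : continuous f ->
    \int[mu]_(x in J) f x = \int[mu]_(x in `[- beta, beta]) f x.
  by move=> cf; rewrite Rintegral_itv_oo_cc //; exact: continuous_integrable_itv.
have u'i : mu.-integrable `[- beta, beta] (EFin \o u').
  apply: integrableS (H1_integrable_deriv uH1) => //.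
  by apply: subset_itv; rewrite bnd_simp ?lerN2.
apply: le_trans (energy_ge_restrict _ _ beta_in c_ge0 c_le).
rewrite EFinD; apply: leeD; last first.
  by rewrite lee_fin int_J // Rintegral_itv_even ?(ltW beta_gt0) // mulrA [c * 2]mulrC.
have mu'J : measurable_fun J u' by case: uH1 => mu' _ _; exact: measurable_funS mu'.
have JB : J `<=` `[- beta, beta] by apply: subset_itv; rewrite bnd_simp.
have u'iJ : mu.-integrable J (EFin \o u') by apply: integrableS u'i.
have a_invJ : mu.-integrable J (EFin \o (fun x => (a x)^-1)).
  by apply: integrableS (continuous_integrable_itv _ (- beta) beta ca_inv).
have W_E : \int[mu]_(x in J) (a x)^-1 = 2 * \int[mu]_(x in `[0, beta]) (a x)^-1.
  by rewrite int_J // Rintegral_itv_even ?(ltW beta_gt0) // => x; rewrite a_even.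
have W_gt0 : 0 < \int[mu]_(x in J) (a x)^-1 by rewrite W_E mulr_gt0.
have := sqr_Rintegral_le_weighted mJ u' a mu'J
  (measurable_funTS (continuous_measurable_fun ca)) a_gt0 u'iJ a_invJ W_gt0.
rewrite W_E Rintegral_itv_oo_cc // int_u'.
apply: le_trans; rewrite lee_fin.
have -> : (2 * u beta) ^+ 2 / (2 * (2 * \int[mu]_(x in `[0, beta]) (a x)^-1)) =
          u beta ^+ 2 / \int[mu]_(x in `[0, beta]) (a x)^-1.
  by field; rewrite gt_eqF.
apply: ler_wpM2r; first by rewrite invr_ge0 ltW.
by rewrite -[u beta ^+ 2]real_normK ?num_real // !expr2 ler_pM.
Qed.

End energy_bounds.

Theorem proposition5p7 (R : realType) (a b G : R -> R) (M m : R) :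
  continuous a -> continuous b -> continuous G ->
  (forall x, a (- x) = a x) -> (forall x, b (- x) = b x) ->
  (forall x, 0 < a x) -> (forall x, 0 < b x) ->
  (forall s, G (- s) = G s) ->
  0 < M -> G M = 0 -> (forall s, G M <= G s) ->
  (forall s, 0 <= s < M -> 0 < G s) ->
  0 < m ->
  0 < Cas a b G m M /\
  forall L : R, 0 < L ->
  forall u u' : R -> R,
    H1m_with_deriv L m u u' -> odd_on L u ->
    ((Cas a b G m M)%:E <= energy a b G L u u')%E.
Proof.
move=> ca cb cG a_even b_even a_gt0 b_gt0 G_even M_gt0 GM G_ge_GM G_gt0 m_gt0.
split; first exact: Cas_gt0.
move=> L L_gt0 u u' uH1m u_odd.
have m0_in : 0 < m0 m M <= m.
  rewrite m0_gt0 //= ltW // (lt_le_trans (m0_lt_min m_gt0 M_gt0)) //.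
  by rewrite ge_min lexx.
have [beta /andP[beta_gt0 beta_le] [hit small int_u']] :=
  H1m_odd_exit L_gt0 uH1m u_odd _ m0_in.
have G_ge0 s : 0 <= G s by rewrite -GM.
apply: le_trans (_ : _ <=
  (m0 m M ^+ 2 / \int[lebesgue_measure]_(x in `[0, beta]) (a x)^-1
   + 2 * G0 G m M * \int[lebesgue_measure]_(x in `[0, beta]) b x)%:E)%E _.
  by rewrite lee_fin; exact: Cas_le.
have [uH1 _ _] := uH1m.
apply: energy_ge_exit => //; first by rewrite beta_gt0.
- by apply/ltW; exact: G0_gt0.
- by apply/ltW; exact: m0_gt0.
- by move=> x /small; exact: G0_le.
Qed.
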